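(* For any $(\Sigma_{\rho_0},\dots,\Sigma_{\rho_{T-1}})\in\mathcal M_T$, the matrices $\Pi_k$ satisfy $\hat\Pi_k\succeq\Pi_k\succeq\check\Pi_k\succeq0$ for all $k\in\{0,\dots,T\}$, and $\Sigma_{Q_k}$ satisfies $\hat\Sigma_{Q_k}\succeq\Sigma_{Q_k}\succeq\check\Sigma_{Q_k}\succ0$ for all $k\in\{0,\dots,T-1\}$, where $\hat\Sigma_{Q_k}=\varepsilon(R_k+B_k^\top\check\Pi_{k+1}B_k)^{-1}$ and $\check\Sigma_{Q_k}=\varepsilon(R_k+B_k^\top\hat\Pi_{k+1}B_k)^{-1}$.
   Context: Fix integers $n,m,T\ge1$, $\varepsilon>0$, $A_k\in\mathbb R^{n\times n}$, $B_k\in\mathbb R^{n\times m}$, symmetric positive definite $R_k\in\mathbb R^{m\times m}$ ($k=0,\dots,T-1$) and $F\in\mathbb R^{n\times n}$. $\mathcal M_T=(\mathbb S^m_{\succeq0})^T$, $\mathbb S^m_{\succeq0}$ the symmetric PSD $m\times m$ matrices; $\Sigma^{1/2}$ the PSD square root. For $(\Sigma_{\rho_0},\dots,\Sigma_{\rho_{T-1}})\in\mathcal M_T$: $\Pi_T=F$, $C_k=(R_k+B_k^\top\Pi_{k+1}B_k)/\varepsilon$, $\Pi_k=A_k^\top\Pi_{k+1}A_k-\frac1\varepsilon A_k^\top\Pi_{k+1}B_k\Sigma_{\rho_k}^{1/2}(I+\Sigma_{\rho_k}^{1/2}C_k\Sigma_{\rho_k}^{1/2})^{-1}\Sigma_{\rho_k}^{1/2}B_k^\top\Pi_{k+1}A_k$,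 $\Sigma_{Q_k}=\varepsilon(R_k+B_k^\top\Pi_{k+1}B_k)^{-1}$. Also $\check\Pi_T=F$, $\check\Pi_k=A_k^\top\check\Pi_{k+1}A_k-A_k^\top\check\Pi_{k+1}B_k(R_k+B_k^\top\check\Pi_{k+1}B_k)^{-1}B_k^\top\check\Pi_{k+1}A_k$ ($k=T-1,\dots,0$), and $\hat\Pi_T=F$, $\hat\Pi_k=A_k^\top\cdots A_{T-1}^\top FA_{T-1}\cdots A_k$ for $k\le T-1$. *)

From HB Require Import structures.
From mathcomp Require Import all_boot all_order all_algebra.
From mathcomp Require Import boolp reals.
Set Implicit Arguments. Unset Strict Implicit. Unset Printing Implicit Defensive.
Import Order.TTheory GRing.Theory Num.Theory.
Local Open Scope ring_scope.

Section Defs.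
Variable R : realType.

Definition qform (p : nat) (A : 'M[R]_p) (x : 'cV[R]_p) : R := (x^T *m A *m x) 0 0.

Definition psd (p : nat) (A : 'M[R]_p) : Prop :=
  A^T = A /\ forall x : 'cV[R]_p, 0 <= qform A x.

Definition pd (p : nat) (A : 'M[R]_p) : Prop :=
  A^T = A /\ forall x : 'cV[R]_p, x != 0 -> 0 < qform A x.

Definition loewner_ge (p : nat) (A B : 'M[R]_p) : Prop := psd (A - B).

(* the PSD square root (unique when it exists, i.e. when A is PSD) *)
Definition psd_sqrt (p : nat) (A : 'M[R]_p) : 'M[R]_p :=
  match pselect (exists S : 'M[R]_p, psd S /\ S *m S = A) with
  | left h => proj1_sig (cid h)
  | right _ => 0
  end.

(* backward recursion: back step T F j = value at time T - j,
   with value F at time T and value_k = step k value_{k+1}. *)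
Fixpoint back (p : nat) (step : nat -> 'M[R]_p -> 'M[R]_p) (T : nat)
  (F : 'M[R]_p) (j : nat) : 'M[R]_p :=
  match j with
  | 0 => F
  | j'.+1 => step (T - j)%N (back step T F j')
  end.

Definition at_time (p : nat) (step : nat -> 'M[R]_p -> 'M[R]_p) (T : nat)
  (F : 'M[R]_p) (k : nat) : 'M[R]_p := back step T F (T - k)%N.

Variables (n m : nat) (eps : R) (A : nat -> 'M[R]_n) (B : nat -> 'M[R]_(n, m))
  (Rk : nat -> 'M[R]_m) (F : 'M[R]_n) (Sig : nat -> 'M[R]_m) (T : nat).

Definition Pi_step (k : nat) (P : 'M[R]_n) : 'M[R]_n :=
  let C := eps^-1 *: (Rk k + (B k)^T *m P *m B k) in
  let S := psd_sqrt (Sig k) in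
  (A k)^T *m P *m A k
  - eps^-1 *: ((A k)^T *m P *m B k *m S *m invmx (1%:M + S *m C *m S)
               *m S *m (B k)^T *m P *m A k).
Definition Pi (k : nat) : 'M[R]_n := at_time Pi_step T F k.

Definition Pic_step (k : nat) (P : 'M[R]_n) : 'M[R]_n :=
  (A k)^T *m P *m A k
  - (A k)^T *m P *m B k *m invmx (Rk k + (B k)^T *m P *m B k)
      *m (B k)^T *m P *m A k.
Definition Pic (k : nat) : 'M[R]_n := at_time Pic_step T F k.

(* hat-Pi_k = A_k^T ... A_{T-1}^T F A_{T-1} ... A_k, by backward recursion *)
Definition Pih_step (k : nat) (P : 'M[R]_n) : 'M[R]_n := (A k)^T *m P *m A k.
Definition Pih (k : nat) : 'M[R]_n := at_time Pih_step T F k.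

Definition SigQ_of (P : 'M[R]_n) (k : nat) : 'M[R]_m :=
  eps *: invmx (Rk k + (B k)^T *m P *m B k).

Definition SigQ (k : nat) := SigQ_of (Pi k.+1) k.
Definition SigQh (k : nat) := SigQ_of (Pic k.+1) k.
Definition SigQc (k : nat) := SigQ_of (Pih k.+1) k.

End Defs.

(* Each of the three recursions has the form P |-> A^T P A - X^T W X with
   X = B^T P A.  For the Riccati map W = M^-1, M = R + B^T P B; completing the
   square exhibits it as the minimum over gains K of the LQ cost
   (A - B K)^T P (A - B K) + K^T R K, so it is PSD and monotone in P.  For the
   entropic map W = eps^-1 S (1 + S C S)^-1 S with C = M / eps and
   S = Sigma^(1/2), and S (1 + S C S)^-1 S lies between 0 and C^-1 in the
   Loewner order; hence the entropic map is sandwiched between the Riccati map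
   and P |-> A^T P A.  Backward induction from Pi_T = F gives the chain for the
   Pi's, and the bounds on the Sigma_Q's follow because inversion is antitone
   on PD matrices. *)

From HB Require Import structures.
From mathcomp Require Import all_boot all_order all_algebra.
From mathcomp Require Import boolp reals.
From mathcomp Require Import ring zify.
Import Order.TTheory GRing.Theory Num.Theory.
Local Open Scope ring_scope.

Lemma backward_ind (P : nat -> Prop) T :
  P T -> (forall k, (k < T)%N -> P k.+1 -> P k) -> forall k, (k <= T)%N -> P k.
Proof.
move=> PT IH k kT; rewrite -(subKn kT).
elim: (T - k)%N (leq_subr k T) => [|j IHj] jT; first by rewrite subn0.
apply: IH; first lia.
by rewrite subnSK //; apply: IHj; rewrite ltnW.
Qed.

Section LoewnerRiccati.
Set Implicit Arguments. Unset Strict Implicit. Unset Printing Implicit Defensive.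
Variable R : realType.

Lemma mxE_add p q (X Y : 'M[R]_(p, q)) i j : (X + Y) i j = X i j + Y i j.
Proof. by rewrite mxE. Qed.

Lemma mxE_opp p q (X : 'M[R]_(p, q)) i j : (- X) i j = - X i j.
Proof. by rewrite mxE. Qed.

Lemma mxE_scale p q a (X : 'M[R]_(p, q)) i j : (a *: X) i j = a * X i j.
Proof. by rewrite mxE. Qed.

Lemma scalemx_mull p q r a (X : 'M[R]_(p, q)) (Y : 'M[R]_(q, r)) :
  a *: X *m Y = a *: (X *m Y).
Proof. by rewrite scalemxAl. Qed.

Lemma scalemx_mulr p q r a (X : 'M[R]_(p, q)) (Y : 'M[R]_(q, r)) :
  X *m (a *: Y) = a *: (X *m Y).
Proof. by rewrite scalemxAr. Qed.

Lemma trmxD p q (X Y : 'M[R]_(p, q)) : (X + Y)^T = X^T + Y^T.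
Proof. exact: linearD. Qed.

Lemma trmxN p q (X : 'M[R]_(p, q)) : (- X)^T = - X^T.
Proof. exact: linearN. Qed.

Lemma trmxZ p q a (X : 'M[R]_(p, q)) : (a *: X)^T = a *: X^T.
Proof. exact: linearZ. Qed.

Ltac mx_expand :=
  rewrite ?(mulmxBl, mulmxBr, mulmxDl, mulmxDr, mulNmx, mulmxN, mulmxA,
            mul1mx, mulmx1, scalemx_mull, scalemx_mulr, scalerA,
            scalerDr, scalerBr, scaleNr, scalerN).

Ltac mx_cancel u := rewrite ?(mulmxK u, mulmxKV u, mulVmx u, mulmxV u); mx_expand.

(* Once both sides are expanded into linear combinations of left-associated
   products, the identity holds entrywise with the products as atoms. *)
Ltac mx_ring := mx_expand; apply/matrixP => i j;
  rewrite !(mxE_add, mxE_opp, mxE_scale); ring.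

Ltac mx_tr := rewrite ?(trmxD, trmxN, trmxZ, trmx_mul, trmx1, trmxK).

Section Loewner.
Variable p : nat.
Implicit Types (P Q M : 'M[R]_p) (x : 'cV[R]_p).

Lemma qformD P Q x : qform (P + Q) x = qform P x + qform Q x.
Proof. by rewrite /qform mulmxDr mulmxDl mxE_add. Qed.

Lemma qformZ a P x : qform (a *: P) x = a * qform P x.
Proof. by rewrite /qform -scalemxAr -scalemxAl mxE_scale. Qed.

Lemma qform_mulmx q (X : 'M[R]_(p, q)) P y :
  qform (X^T *m P *m X) y = qform P (X *m y).
Proof. by rewrite /qform trmx_mul !mulmxA. Qed.

Lemma qform1 x : qform 1%:M x = \sum_i x i 0 ^+ 2.
Proof. by rewrite /qform mulmx1 mxE; apply: eq_bigr => i _; rewrite mxE expr2. Qed.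

Lemma psd0 : psd (0 : 'M[R]_p).
Proof. by split=> [|x]; rewrite ?trmx0 // /qform mulmx0 mul0mx mxE. Qed.

Lemma pd1 : pd (1%:M : 'M[R]_p).
Proof.
split=> [|x nz]; first exact: trmx1.
have sq_ge0 (i : 'I_p) : 0 <= x i 0 ^+ 2 by exact: sqr_ge0.
rewrite qform1 lt_def sumr_ge0 // andbT; apply: contra nz => /eqP x0.
apply/eqP/matrixP => i j; rewrite ord1 mxE; apply/eqP.
by rewrite -sqrf_eq0 (psumr_eq0P (fun i _ => sq_ge0 i) x0).
Qed.

Lemma psdD P Q : psd P -> psd Q -> psd (P + Q).
Proof.
move=> [sP pP] [sQ pQ]; split=> [|x]; first by rewrite trmxD sP sQ.
by rewrite qformD addr_ge0.
Qed.

Lemma psdZ a P : 0 <= a -> psd P -> psd (a *: P).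
Proof.
move=> a0 [sP pP]; split=> [|x]; first by rewrite trmxZ sP.
by rewrite qformZ mulr_ge0.
Qed.

Lemma psd_mulmx q (X : 'M[R]_(p, q)) P : psd P -> psd (X^T *m P *m X).
Proof.
move=> [sP pP]; split=> [|y]; last by rewrite qform_mulmx.
by rewrite !trmx_mul trmxK sP mulmxA.
Qed.

Lemma pd_psd P : pd P -> psd P.
Proof.
move=> [sP pP]; split=> // x; have [->|/pP/ltW//] := eqVneq x 0.
by rewrite /qform mulmx0 mxE.
Qed.

Lemma pdD P Q : pd P -> psd Q -> pd (P + Q).
Proof.
move=> [sP pP] [sQ pQ]; split=> [|x /pP Px]; first by rewrite trmxD sP sQ.
by rewrite qformD; exact: ltr_wpDr (pQ x) Px.
Qed.

Lemma pdZ a P : 0 < a -> pd P -> pd (a *: P).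
Proof.
move=> a0 [sP pP]; split=> [|x /pP Px]; first by rewrite trmxZ sP.
by rewrite qformZ mulr_gt0.
Qed.

Lemma pd_unitmx P : pd P -> P \in unitmx.
Proof.
move=> [sP pP]; rewrite unitmxE unitfE; apply/negP => /det0P [v v0 vP].
have /pP : v^T != 0 by rewrite -(inj_eq (@trmx_inj _ _ _)) trmxK trmx0.
by rewrite /qform -mulmxA -{1}sP -trmx_mul vP trmx0 mulmx0 mxE ltxx.
Qed.

Lemma invmx_sym P : P^T = P -> (invmx P)^T = invmx P.
Proof. by move=> sP; rewrite trmx_inv sP. Qed.

Lemma invmx_conj P : pd P -> invmx P = (invmx P)^T *m P *m invmx P.
Proof.
by move=> hP; rewrite invmx_sym ?(proj1 hP) // mulVmx ?mul1mx // pd_unitmx.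
Qed.

Lemma pd_invmx P : pd P -> pd (invmx P).
Proof.
move=> hP; split; first exact/invmx_sym/(proj1 hP).
move=> x x0; rewrite invmx_conj // qform_mulmx; apply: (proj2 hP).
by apply: contra x0 => /eqP Px; rewrite -(mulKVmx (pd_unitmx hP) x) Px mulmx0.
Qed.

Lemma psd_invmx P : pd P -> psd (invmx P).
Proof. by move=> /pd_invmx/pd_psd. Qed.

Lemma loewner_ge_refl P : loewner_ge P P.
Proof. by rewrite /loewner_ge subrr; exact: psd0. Qed.

Lemma loewner_ge_trans P Q M : loewner_ge P Q -> loewner_ge Q M -> loewner_ge P M.
Proof. by move=> PQ QM; have := psdD PQ QM; rewrite addrA subrK. Qed.

Lemma psd_loewner_ge P Q : loewner_ge P Q -> psd Q -> psd P.
Proof. by move=> PQ hQ; have := psdD PQ hQ; rewrite subrK. Qed.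

Lemma pd_loewner_ge P Q : loewner_ge P Q -> pd Q -> pd P.
Proof. by move=> PQ hQ; have := pdD hQ PQ; rewrite addrC subrK. Qed.

Lemma loewner_geZ a P Q : 0 <= a -> loewner_ge P Q -> loewner_ge (a *: P) (a *: Q).
Proof. by move=> a0 PQ; rewrite /loewner_ge -scalerBr; exact: psdZ. Qed.

Lemma loewner_ge_mulmx q (X : 'M[R]_(p, q)) P Q :
  loewner_ge P Q -> loewner_ge (X^T *m P *m X) (X^T *m Q *m X).
Proof. by move=> PQ; rewrite /loewner_ge -mulmxBl -mulmxBr; exact: psd_mulmx. Qed.

Lemma loewner_geDl M P Q : loewner_ge P Q -> loewner_ge (M + P) (M + Q).
Proof. by rewrite /loewner_ge opprD addrACA subrr add0r. Qed.

Lemma loewner_geDr M P Q : loewner_ge P Q -> loewner_ge (P + M) (Q + M).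
Proof. by rewrite /loewner_ge opprD addrACA subrr addr0. Qed.

Lemma loewner_geB M P Q : loewner_ge Q P -> loewner_ge (M - P) (M - Q).
Proof. by move=> QP; rewrite /loewner_ge opprB addrC subrKA. Qed.

Lemma loewner_ge_invmx P Q : pd Q -> loewner_ge P Q -> loewner_ge (invmx Q) (invmx P).
Proof.
move=> hQ PQ; have hP := pd_loewner_ge PQ hQ.
have [uP uQ] := (pd_unitmx hP, pd_unitmx hQ).
have [sP sQ] := (proj1 hP, proj1 hQ).
rewrite /loewner_ge; have -> : invmx Q - invmx P = (invmx P)^T *m (P - Q) *m invmx P
   + (invmx P - invmx Q)^T *m Q *m (invmx P - invmx Q).
  mx_tr; rewrite !invmx_sym //.
  by mx_expand; mx_cancel uP; mx_cancel uQ; mx_ring.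
apply: psdD; apply: psd_mulmx => //; exact: pd_psd.
Qed.

Section Shrinkage.
Variables (C S : 'M[R]_p).
Hypothesis sS : S^T = S.

Lemma pd_1_add_conj : psd C -> pd (1%:M + S *m C *m S).
Proof. by move=> hC; apply: pdD; [exact: pd1 | rewrite -{1}sS; exact: psd_mulmx]. Qed.

Lemma psd_conj_invmx_1_add : psd C -> psd (S *m invmx (1%:M + S *m C *m S) *m S).
Proof. by move=> /pd_1_add_conj/psd_invmx/(psd_mulmx S); rewrite sS. Qed.

(* With N := 1 + S C S and G := S N^-1 S, the gap C^-1 - G equals
   (1 - C G)^T C^-1 (1 - C G) + (N^-1 S)^T (N^-1 S): expanding, the cross terms
   G C G + S N^-2 S collapse to G because S C S + 1 = N. *)
Lemma loewner_ge_invmx_conj_invmx_1_add :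
  pd C -> loewner_ge (invmx C) (S *m invmx (1%:M + S *m C *m S) *m S).
Proof.
move=> hC; have hN := pd_1_add_conj (pd_psd hC).
set N := 1%:M + _ in hN *.
have SCS q (X : 'M[R]_(q, p)) : X *m S *m C *m S = X *m N - X.
  by rewrite /N mulmxDr mulmx1 !mulmxA addrAC subrr add0r.
clearbody N; have [uC uN] := (pd_unitmx hC, pd_unitmx hN).
have [sC sN] := (proj1 hC, proj1 hN).
rewrite /loewner_ge; set G := S *m invmx N *m S.
have -> : invmx C - G = (1%:M - C *m G)^T *m invmx C *m (1%:M - C *m G)
                        + (invmx N *m S)^T *m 1%:M *m (invmx N *m S).
  rewrite /G; mx_tr; rewrite !invmx_sym // sS sC; mx_expand; mx_cancel uC.
  by rewrite !SCS; mx_expand; mx_cancel uN; mx_ring.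
apply: psdD; apply: psd_mulmx; [exact: psd_invmx | exact: pd_psd pd1].
Qed.

End Shrinkage.

End Loewner.

Section Riccati.
Variables (p q : nat) (A : 'M[R]_p) (B : 'M[R]_(p, q)) (Rr : 'M[R]_q).
Hypothesis pdR : pd Rr.
Implicit Types (P Q : 'M[R]_p) (K : 'M[R]_(q, p)).

Definition riccati P : 'M[R]_p :=
  A^T *m P *m A - A^T *m P *m B *m invmx (Rr + B^T *m P *m B) *m B^T *m P *m A.

Definition lq_cost P K : 'M[R]_p :=
  (A - B *m K)^T *m P *m (A - B *m K) + K^T *m Rr *m K.

Definition riccati_gain P : 'M[R]_(q, p) :=
  invmx (Rr + B^T *m P *m B) *m (B^T *m P *m A).

Lemma pd_riccati_weight P : psd P -> pd (Rr + B^T *m P *m B).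
Proof. by move=> hP; apply: pdD => //; exact: psd_mulmx. Qed.

Lemma lq_cost_completed_square P K : psd P ->
  lq_cost P K = riccati P + (K - riccati_gain P)^T *m (Rr + B^T *m P *m B)
                            *m (K - riccati_gain P).
Proof.
move=> hP; have hM := pd_riccati_weight hP; rewrite /lq_cost /riccati /riccati_gain.
move: (pd_unitmx hM) (proj1 hM); set M := Rr + _ => uM sM.
have -> : Rr = M - B^T *m P *m B by rewrite addrK.
clearbody M; mx_tr; rewrite (proj1 hP) invmx_sym //; mx_expand; mx_cancel uM; mx_ring.
Qed.

Lemma riccati_lq_cost_gain P : psd P -> riccati P = lq_cost P (riccati_gain P).
Proof. by move=> hP; rewrite lq_cost_completed_square // subrr trmx0 !mul0mx addr0. Qed.

Lemma loewner_ge_lq_cost_riccati P K : psd P -> loewner_ge (lq_cost P K) (riccati P).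
Proof.
move=> hP; rewrite /loewner_ge lq_cost_completed_square // addrC addKr.
by apply/psd_mulmx/pd_psd/pd_riccati_weight.
Qed.

Lemma psd_lq_cost P K : psd P -> psd (lq_cost P K).
Proof. by move=> hP; apply: psdD; apply: psd_mulmx => //; exact: pd_psd. Qed.

Lemma loewner_ge_lq_cost P Q K :
  loewner_ge P Q -> loewner_ge (lq_cost P K) (lq_cost Q K).
Proof. by move=> PQ; apply/loewner_geDr/loewner_ge_mulmx. Qed.

Lemma loewner_ge_invmx_riccati_weight P Q : psd Q -> loewner_ge P Q ->
  loewner_ge (invmx (Rr + B^T *m Q *m B)) (invmx (Rr + B^T *m P *m B)).
Proof.
move=> hQ PQ; apply: loewner_ge_invmx (pd_riccati_weight hQ) _.
exact/loewner_geDl/loewner_ge_mulmx.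
Qed.

Lemma psd_riccati P : psd P -> psd (riccati P).
Proof. by move=> hP; rewrite riccati_lq_cost_gain //; exact: psd_lq_cost. Qed.

Lemma loewner_ge_riccati P Q :
  psd Q -> loewner_ge P Q -> loewner_ge (riccati P) (riccati Q).
Proof.
move=> hQ PQ; have hP := psd_loewner_ge PQ hQ.
rewrite [riccati P]riccati_lq_cost_gain //.
apply: loewner_ge_trans (loewner_ge_lq_cost _ PQ) (loewner_ge_lq_cost_riccati _ hQ).
Qed.

Definition entropic_riccati (e : R) (S : 'M[R]_q) P : 'M[R]_p :=
  let C := e^-1 *: (Rr + B^T *m P *m B) in
  A^T *m P *m A - e^-1 *: (A^T *m P *m B *m S *m invmx (1%:M + S *m C *m S)
                           *m S *m B^T *m P *m A).

Section Entropic.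
Variables (e : R) (S : 'M[R]_q).
Hypotheses (e0 : 0 < e) (sS : S^T = S).

Lemma pd_entropic_weight P : psd P -> pd (e^-1 *: (Rr + B^T *m P *m B)).
Proof. by move=> hP; apply: pdZ; [rewrite invr_gt0 | exact: pd_riccati_weight]. Qed.

Lemma entropic_riccatiE P : psd P ->
  entropic_riccati e S P = A^T *m P *m A - e^-1 *:
    ((B^T *m P *m A)^T
     *m (S *m invmx (1%:M + S *m (e^-1 *: (Rr + B^T *m P *m B)) *m S) *m S)
     *m (B^T *m P *m A)).
Proof. by move=> hP; rewrite /entropic_riccati; mx_tr; rewrite (proj1 hP) !mulmxA. Qed.

Lemma riccatiE P : psd P ->
  riccati P = A^T *m P *m A - e^-1 *:
    ((B^T *m P *m A)^T *m invmx (e^-1 *: (Rr + B^T *m P *m B)) *m (B^T *m P *m A)).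
Proof.
move=> hP; have /pd_unitmx uC := pd_entropic_weight hP.
rewrite invmxZ // invrK /riccati; mx_tr; rewrite (proj1 hP) !mulmxA.
by mx_expand; rewrite mulVf ?scale1r // gt_eqF.
Qed.

Lemma loewner_ge_entropic_riccati P : psd P ->
  loewner_ge (A^T *m P *m A) (entropic_riccati e S P).
Proof.
move=> hP; rewrite entropic_riccatiE // /loewner_ge opprB subrKC.
apply: psdZ; first by rewrite invr_ge0 ltW.
by apply/psd_mulmx/psd_conj_invmx_1_add/pd_psd/pd_entropic_weight.
Qed.

Lemma loewner_ge_entropic_riccati_riccati P : psd P ->
  loewner_ge (entropic_riccati e S P) (riccati P).
Proof.
move=> hP; rewrite entropic_riccatiE // riccatiE //.
apply/loewner_geB/loewner_geZ; first by rewrite invr_ge0 ltW.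
by apply/loewner_ge_mulmx/loewner_ge_invmx_conj_invmx_1_add/pd_entropic_weight.
Qed.

End Entropic.

End Riccati.

Lemma psd_psd_sqrt p (S : 'M[R]_p) : psd (psd_sqrt S).
Proof.
rewrite /psd_sqrt; case: pselect => [h|_]; last exact: psd0.
exact: (proj1 (proj2_sig (cid h))).
Qed.

Lemma at_time_last p (step : nat -> 'M[R]_p -> 'M[R]_p) T F : at_time step T F T = F.
Proof. by rewrite /at_time subnn. Qed.

Lemma at_timeS p (step : nat -> 'M[R]_p -> 'M[R]_p) T F k : (k < T)%N ->
  at_time step T F k = step k (at_time step T F k.+1).
Proof. by move=> kT; rewrite /at_time -subnSK //= subnSK // subKn // ltnW. Qed.

End LoewnerRiccati.

Section Schedule.
Variables (R : realType) (n m T : nat) (eps : R) (A : nat -> 'M[R]_n)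
  (B : nat -> 'M[R]_(n, m)) (Rk : nat -> 'M[R]_m) (F : 'M[R]_n)
  (Sig : nat -> 'M[R]_m).
Hypotheses (eps_gt0 : 0 < eps) (pdRk : forall k, (k < T)%N -> pd (Rk k))
  (psdF : psd F).

Local Notation Pih := (Pih A F T).
Local Notation Pi := (Pi eps A B Rk F Sig T).
Local Notation Pic := (Pic A B Rk F T).

Lemma PihS k : (k < T)%N -> Pih k = (A k)^T *m Pih k.+1 *m A k.
Proof. exact: at_timeS. Qed.

Lemma PiS k : (k < T)%N ->
  Pi k = entropic_riccati (A k) (B k) (Rk k) eps (psd_sqrt (Sig k)) (Pi k.+1).
Proof. exact: at_timeS. Qed.

Lemma PicS k : (k < T)%N -> Pic k = riccati (A k) (B k) (Rk k) (Pic k.+1).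
Proof. exact: at_timeS. Qed.

Lemma Pi_sandwich k : (k <= T)%N ->
  [/\ loewner_ge (Pih k) (Pi k), loewner_ge (Pi k) (Pic k) & psd (Pic k)].
Proof.
move: k; apply: backward_ind => [|k kT [Ph_ge_P P_ge_Pc psdPc]].
  by rewrite /Pih /Pi /Pic !at_time_last; split=> //; exact: loewner_ge_refl.
have psdP := psd_loewner_ge P_ge_Pc psdPc.
have sS := proj1 (psd_psd_sqrt (Sig k)).
rewrite PihS // PiS // PicS //; split.
- apply: loewner_ge_trans (loewner_ge_mulmx _ Ph_ge_P) _.
  exact: (loewner_ge_entropic_riccati (A k) (B k) (pdRk kT) eps_gt0 sS psdP).
- apply: loewner_ge_trans
    (loewner_ge_entropic_riccati_riccati _ _ (pdRk kT) eps_gt0 sS psdP) _.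
  exact: (loewner_ge_riccati (A k) (B k) (pdRk kT) psdPc P_ge_Pc).
- exact: (psd_riccati (A k) (B k) (pdRk kT) psdPc).
Qed.

End Schedule.

Theorem lemma2 (R : realType) (n m T : nat) (eps : R)
  (A : nat -> 'M[R]_n) (B : nat -> 'M[R]_(n, m)) (Rk : nat -> 'M[R]_m)
  (F : 'M[R]_n) (Sig : nat -> 'M[R]_m) :
  (0 < n)%N -> (0 < m)%N -> (0 < T)%N -> 0 < eps ->
  (forall k, (k < T)%N -> pd (Rk k)) ->
  psd F ->
  (forall k, (k < T)%N -> psd (Sig k)) ->
  (forall k, (k <= T)%N ->
     loewner_ge (Pih A F T k) (Pi eps A B Rk F Sig T k) /\
     loewner_ge (Pi eps A B Rk F Sig T k) (Pic A B Rk F T k) /\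
     psd (Pic A B Rk F T k)) /\
  (forall k, (k < T)%N ->
     loewner_ge (SigQh eps A B Rk F T k) (SigQ eps A B Rk F Sig T k) /\
     loewner_ge (SigQ eps A B Rk F Sig T k) (SigQc eps A B Rk F T k) /\
     pd (SigQc eps A B Rk F T k)).
Proof.
move=> _ _ _ eps_gt0 pdRk psdF _.
have sandwich := Pi_sandwich A B Sig eps_gt0 pdRk psdF.
split=> k kT; first by have [] := sandwich k kT.
have [Ph_ge_P P_ge_Pc psdPc] := sandwich k.+1 kT.
have psdP := psd_loewner_ge P_ge_Pc psdPc.
have psdPh := psd_loewner_ge Ph_ge_P psdP.
rewrite /SigQh /SigQ /SigQc /SigQ_of; split; [|split].
- exact/(loewner_geZ (ltW eps_gt0))/(loewner_ge_invmx_riccati_weight _ (pdRk k kT)).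
- exact/(loewner_geZ (ltW eps_gt0))/(loewner_ge_invmx_riccati_weight _ (pdRk k kT)).
- exact/(pdZ eps_gt0)/pd_invmx/(pd_riccati_weight _ (pdRk k kT)).
Qed.
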